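(* The $K$-bilinear map $\psi:\mathfrak{stl}_4(R)\times\mathfrak{stl}_4(R)\to\mathcal W$ defined below is a Leibniz $2$-cocycle, i.e. for all $x,y,z\in\mathfrak{stl}_4(R)$, $$\psi(x,[y,z])+\psi([x,z],y)-\psi([x,y],z)=0.$$
   Context: $K$ is a unital commutative ring, $R$ a unital associative $K$-algebra, free as a $K$-module with a basis containing $1$. Leibniz algebra: $K$-bilinear bracket with $[x,[y,z]]=[[x,y],z]-[[x,z],y]$. $\mathfrak{stl}_4(R)$ is the Leibniz algebra over $K$ generated by $X_{ij}(a)$, $a\in R$, $1\le i\ne j\le 4$, subject to: $X_{ij}$ is $K$-linear in $a$; $[X_{ij}(a),X_{jk}(b)]=X_{ik}(ab)$ and $[X_{ij}(a),X_{ki}(b)]=-X_{kj}(ba)$ for distinct $i,j,k$; $[X_{ij}(a),X_{kl}(b)]=0$ for $j\ne k$, $i\ne l$. With $H$ the $K$-span of all $[X_{ij}(a),X_{ji}(b)]$, one has $\mathfrak{stl}_4(R)=H\oplus\bigoplus_{i\ne j}X_{ij}(R)$ and each $a\mapsto X_{ij}(a)$ is injective. $R_2:=R/\mathcal I_2$ where $\mathcal I_2=2R+R[R,R]$ is the ideal generated by all $2a$ and $ab-ba$; $\bar a$ denotes the class of $a$ (so $R_2$ is commutative and $\bar a=-\bar a$). $\mathcal W=R_2^6$, and $\epsilon_m(\bar a)$ ($1\le m\le 6$) is the element with $m$-th coordinate $\bar a$ and others $0$. Let $P$ be the set of quadruples $(i,j,k,l)$ with $\{i,j,k,l\}=\{1,2,3,4\}$;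 $S_4$ acts on $P$ componentwise, and $G=\{(1),(13),(24),(13)(24)\}$. Partition $P$ into the six sets $(\sigma G)((1,2,3,4))$, $\sigma G\in S_4/G$ (so $(i,j,k,l)$, $(k,j,i,l)$, $(i,l,k,j)$, $(k,l,i,j)$ lie in the same class); label these classes $1,\dots,6$ with the class of $(1,2,3,4)$ labelled $1$, and let $\theta:P\to\{1,\dots,6\}$ send a quadruple to its label. Define $\psi$ as the $K$-bilinear map with $\psi(X_{ij}(a),X_{kl}(b))=\epsilon_{\theta((i,j,k,l))}(\overline{ab})$ for $a,b\in R$ and $i,j,k,l$ pairwise distinct, $\psi(X_{ij}(a),X_{kl}(b))=0$ if $i,j,k,l$ are not pairwise distinct, and $\psi(h,x)=\psi(x,h)=0$ for $h\in H$. *)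

From HB Require Import structures.
From mathcomp Require Import all_boot all_order all_algebra.
Set Implicit Arguments. Unset Strict Implicit. Unset Printing Implicit Defensive.
Import GRing.Theory.
Local Open Scope ring_scope.

Definition free_with_basis_containing_1 (K : comNzRingType) (R : algType K) : Prop :=
  exists (I : eqType) (b : I -> R) (i0 : I),
    b i0 = 1 /\
    (forall x : R, exists (s : seq I) (c : I -> K), x = \sum_(i <- s) c i *: b i) /\
    (forall (s : seq I) (c : I -> K), uniq s ->
        \sum_(i <- s) c i *: b i = 0 -> forall i, i \in s -> c i = 0).

(* The ideal I_2 = 2R + R[R,R] of R: the two-sided ideal generated by all 2a *)
(* and all ab - ba, i.e. the set of finite sums of elements u * g * v with g  *)
(* a generator.                                                               *)
Definition ideal_gen_I2 (K : comNzRingType) (R : algType K) (g : R) : Prop :=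
  (exists a : R, g = a *+ 2) \/ (exists a b : R, g = a * b - b * a).

Definition in_I2 (K : comNzRingType) (R : algType K) (x : R) : Prop :=
  exists (n : nat) (u g v : 'I_n -> R),
    (forall t, ideal_gen_I2 (g t)) /\ x = \sum_(t < n) u t * g t * v t.

Definition is_quotient_R2 (K : comNzRingType) (R : algType K) (R2 : lmodType K)
  (pr : R -> R2) : Prop :=
  (forall (k : K) (a b : R), pr (k *: a + b) = k *: pr a + pr b) /\
  (forall y : R2, exists a : R, pr a = y) /\
  (forall a : R, pr a = 0 <-> in_I2 a).

Definition is_leibniz (K : comNzRingType) (L : lmodType K) (br : L -> L -> L) : Prop :=
  (forall (k : K) (x y z : L), br (k *: x + y) z = k *: br x z + br y z) /\
  (forall (k : K) (x y z : L), br x (k *: y + z) = k *: br x y + br x z) /\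
  (forall x y z : L, br x (br y z) = br (br x y) z - br (br x z) y).

Definition stl4_relations (K : comNzRingType) (R : algType K) (M : lmodType K)
  (br : M -> M -> M) (Y : 'I_4 -> 'I_4 -> R -> M) : Prop :=
  (forall (i j : 'I_4), i != j ->
     forall (k : K) (a b : R), Y i j (k *: a + b) = k *: Y i j a + Y i j b) /\
  (forall (i j k : 'I_4), i != j -> j != k -> i != k ->
     forall a b : R, br (Y i j a) (Y j k b) = Y i k (a * b)) /\
  (forall (i j k : 'I_4), i != j -> j != k -> i != k ->
     forall a b : R, br (Y i j a) (Y k i b) = - Y k j (b * a)) /\
  (forall (i j k l : 'I_4), i != j -> k != l -> j != k -> i != l ->
     forall a b : R, br (Y i j a) (Y k l b) = 0).

Definition is_stl4 (K : comNzRingType) (R : algType K) (L : lmodType K)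
  (br : L -> L -> L) (X : 'I_4 -> 'I_4 -> R -> L) : Prop :=
  is_leibniz br /\ stl4_relations br X /\
  (forall (M : lmodType K) (brM : M -> M -> M) (Y : 'I_4 -> 'I_4 -> R -> M),
     is_leibniz brM -> stl4_relations brM Y ->
     (exists f : L -> M,
        (forall (k : K) (x y : L), f (k *: x + y) = k *: f x + f y) /\
        (forall x y : L, f (br x y) = brM (f x) (f y)) /\
        (forall (i j : 'I_4) (a : R), i != j -> f (X i j a) = Y i j a)) /\
     (forall f g : L -> M,
        (forall (k : K) (x y : L), f (k *: x + y) = k *: f x + f y) ->
        (forall x y : L, f (br x y) = brM (f x) (f y)) ->
        (forall (i j : 'I_4) (a : R), i != j -> f (X i j a) = Y i j a) ->
        (forall (k : K) (x y : L), g (k *: x + y) = k *: g x + g y) ->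
        (forall x y : L, g (br x y) = brM (g x) (g y)) ->
        (forall (i j : 'I_4) (a : R), i != j -> g (X i j a) = Y i j a) ->
        forall x, f x = g x)).

Definition pairwise_distinct4 (i j k l : 'I_4) : bool :=
  [&& i != j, i != k, i != l, j != k, j != l & k != l].

(* (i,j,k,l) and (i',j',k',l') lie in the same class (sigma G)((1,2,3,4)),   *)
(* G = {(1),(13),(24),(13)(24)} acting on positions.                          *)
Definition same_class4 (i j k l i' j' k' l' : 'I_4) : Prop :=
  [\/ (i', j', k', l') = (i, j, k, l), (i', j', k', l') = (k, j, i, l),
      (i', j', k', l') = (i, l, k, j) | (i', j', k', l') = (k, l, i, j)].

Definition is_class_labelling (theta : 'I_4 -> 'I_4 -> 'I_4 -> 'I_4 -> 'I_6) : Prop :=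
  (forall i j k l i' j' k' l' : 'I_4,
     pairwise_distinct4 i j k l -> pairwise_distinct4 i' j' k' l' ->
     (theta i j k l = theta i' j' k' l' <-> same_class4 i j k l i' j' k' l')) /\
  theta (inord 0) (inord 1) (inord 2) (inord 3) = ord0.

(* epsilon_m(r) in W = R2^6; an element w of W is represented by its        *)
(* coordinate function 'I_6 -> R2, and eps m r t is the t-th coordinate.     *)
Definition eps (K : comNzRingType) (R2 : lmodType K) (m : 'I_6) (r : R2) (t : 'I_6) : R2 :=
  if t == m then r else 0.

(* By its universal property, stl_4(R) maps to gl_4(R_2), the 4x4 matrices over the
   commutative ring R_2 = R/I_2 with the commutator bracket, via F : X_ij(a) |-> abar E_ij.
   On gl_4(R_2) let psi_gl4 be the biadditive map whose t-th coordinate is the sum of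
   A_ij C_kl over the quadruples (i,j,k,l) of class t. Since stl_4(R) is additively
   spanned by the X_ij(a) and the [X_ij(a), X_ji(b)], and the latter go to diagonal
   matrices, psi = psi_gl4 o (F x F). The image of F is traceless, and on traceless
   matrices the cocycle identity for psi_gl4 splits into one polynomial identity per
   class; once a diagonal entry is eliminated through the trace, all its coefficients
   are even, so it holds in R_2, where 2 = 0. *)

From HB Require Import structures.
From mathcomp Require Import all_boot all_order all_algebra ring.
From Stdlib Require Import ClassicalEpsilon.
Set Implicit Arguments. Unset Strict Implicit. Unset Printing Implicit Defensive.
Import GRing.Theory.
Local Open Scope ring_scope.

Section LinearAxiom.
Variables (K : pzRingType) (V W : lmodType K) (f : V -> W).
Hypothesis f_lin : linear f.

Let fL : {linear V -> W} := HB.pack f (GRing.isLinear.Build K V W *:%R f f_lin).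

Lemma linear_axiom0 : f 0 = 0. Proof. exact: (linear0 fL). Qed.
Lemma linear_axiomD x y : f (x + y) = f x + f y. Proof. exact: (linearD fL). Qed.
Lemma linear_axiomN x : f (- x) = - f x. Proof. exact: (linearN fL). Qed.
Lemma linear_axiomB x y : f (x - y) = f x - f y. Proof. exact: (linearB fL). Qed.
Lemma linear_axiomZ k x : f (k *: x) = k *: f x. Proof. exact: (linearZZ fL). Qed.

End LinearAxiom.

Lemma commutator_mulr (T : pzRingType) (x y z : T) :
  x * (y * z) - y * z * x = (x * y - y * x) * z + y * (x * z - z * x).
Proof. by rewrite mulrBl mulrBr !mulrA addrA subrK. Qed.
Lemma commutatorB (T : pzRingType) (x u v : T) :
  x * (u - v) - (u - v) * x = (x * u - u * x) - (x * v - v * x).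
Proof. by rewrite mulrBr mulrBl !opprB addrACA [RHS]addrACA [- _ + - _]addrC. Qed.
Lemma commutator_leibniz (T : pzRingType) (x y z : T) :
  x * (y * z - z * y) - (y * z - z * y) * x =
  (x * y - y * x) * z - z * (x * y - y * x) - ((x * z - z * x) * y - y * (x * z - z * x)).
Proof. by rewrite commutatorB !commutator_mulr opprD !opprB [- _ - _]addrC addrACA. Qed.

Lemma pairwise_distinct4_swap13 i j k l :
  pairwise_distinct4 k j i l = pairwise_distinct4 i j k l.
Proof.
rewrite /pairwise_distinct4 (eq_sym k j) (eq_sym k i) (eq_sym j i).
by case: (i == j); case: (i == k); case: (i == l);
  case: (j == k); case: (j == l); case: (k == l).
Qed.

Lemma pairwise_distinct4_swap24 i j k l :
  pairwise_distinct4 i l k j = pairwise_distinct4 i j k l.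
Proof.
rewrite /pairwise_distinct4 (eq_sym l k) (eq_sym l j) (eq_sym k j).
by case: (i == j); case: (i == k); case: (i == l);
  case: (j == k); case: (j == l); case: (k == l).
Qed.

Lemma pairwise_distinct4_uniq i j k l :
  pairwise_distinct4 i j k l = uniq [:: i; j; k; l].
Proof. by rewrite /pairwise_distinct4 /= !inE !negb_or !andbT -!andbA. Qed.

Lemma sum_ord4_distinct (V : nmodType) (F : 'I_4 -> V) i j k l :
  pairwise_distinct4 i j k l -> \sum_(m < 4) F m = F i + F j + F k + F l.
Proof.
rewrite pairwise_distinct4_uniq => hu.
have full : [:: i; j; k; l] =i 'I_4.
  apply/subset_cardP; last exact/subsetP.
  by rewrite card_ord (card_uniqP hu).
transitivity (\sum_(m in [:: i; j; k; l]) F m); first by apply: eq_bigl => m; rewrite full.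
by rewrite -big_uniq // !big_cons big_nil /= addr0 !addrA.
Qed.

Lemma sum_offdiag_pairs (V : nmodType) n (F : 'I_n -> 'I_n -> V) :
  (forall i, F i i = 0) ->
  \sum_(i < n) \sum_(k < n) F i k =
  \sum_(i < n) \sum_(k < n) (if (i < k)%N then F i k + F k i else 0).
Proof.
move=> F0; have split_if b x y :
    (if b then x + y else 0) = (if b then x else 0) + (if b then y else 0) :> V.
  by case: b; rewrite ?addr0.
under [RHS]eq_bigr do under eq_bigr do rewrite split_if.
under [RHS]eq_bigr do rewrite big_split /=.
rewrite big_split /= [X in _ + X]exchange_big -big_split /=.
apply: eq_bigr => i _; rewrite -big_split; apply: eq_bigr => k _ /=.
by case: ltngtP => [||/val_inj ->]; rewrite ?addr0 ?add0r ?F0.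
Qed.

Definition sum_quad (V : nmodType) (f : 'I_4 -> 'I_4 -> 'I_4 -> 'I_4 -> V) : V :=
  \sum_(i < 4) \sum_(j < 4) \sum_(k < 4) \sum_(l < 4) f i j k l.

Lemma eq_sum_quad (V : nmodType) (f g : 'I_4 -> 'I_4 -> 'I_4 -> 'I_4 -> V) :
  (forall i j k l, f i j k l = g i j k l) -> sum_quad f = sum_quad g.
Proof. by move=> efg; rewrite /sum_quad; do 4!(apply: eq_bigr => ? _). Qed.

Lemma sum_quadD (V : nmodType) (f g : 'I_4 -> 'I_4 -> 'I_4 -> 'I_4 -> V) :
  sum_quad f + sum_quad g = sum_quad (fun i j k l => f i j k l + g i j k l).
Proof. by rewrite /sum_quad; do 4!(rewrite -big_split; apply: eq_bigr => ? _ /=). Qed.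

Lemma sum_quadB (V : zmodType) (f g : 'I_4 -> 'I_4 -> 'I_4 -> 'I_4 -> V) :
  sum_quad f - sum_quad g = sum_quad (fun i j k l => f i j k l - g i j k l).
Proof. by rewrite /sum_quad; do 4!(rewrite -sumrB; apply: eq_bigr => ? _). Qed.

Definition class_sum (V : nmodType) (f : 'I_4 -> 'I_4 -> 'I_4 -> 'I_4 -> V) i j k l :=
  f i j k l + f k j i l + f i l k j + f k l i j.

Lemma sum_distinct4_eq0 (V : nmodType) (f : 'I_4 -> 'I_4 -> 'I_4 -> 'I_4 -> V) :
  (forall i j k l, pairwise_distinct4 i j k l -> class_sum f i j k l = 0) ->
  sum_quad (fun i j k l => if pairwise_distinct4 i j k l then f i j k l else 0) = 0.
Proof.
(* Pair up the quadruples by swapping the entries 1 and 3, then 2 and 4. *)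
rewrite /sum_quad => f_class; under eq_bigr => i _ do rewrite exchange_big.
rewrite sum_offdiag_pairs => [|i]; last first.
  by rewrite big1 // => j _; rewrite big1 // => l _; rewrite /pairwise_distinct4 eqxx andbF.
apply: big1 => i _; apply: big1 => k _; case: ifP => // _.
rewrite -big_split /=; under eq_bigr do rewrite -big_split /=.
rewrite sum_offdiag_pairs => [|j]; last first.
  by rewrite /pairwise_distinct4 eqxx /= !andbF add0r.
apply: big1 => j _; apply: big1 => l _; case: ifP => // _.
rewrite (pairwise_distinct4_swap13 i j k l) (pairwise_distinct4_swap24 i j k l).
rewrite (pairwise_distinct4_swap13 i l k j) (pairwise_distinct4_swap24 i j k l).
case: ifP => [/f_class <-|_]; last by rewrite !addr0.
by rewrite /class_sum !addrA.
Qed.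

Section Stl4Span.
Variables (K : comNzRingType) (R : algType K) (L : lmodType K) (br : L -> L -> L)
  (X : 'I_4 -> 'I_4 -> R -> L).
Hypothesis hL : is_stl4 br X.

Local Ltac ne := solve [done | by rewrite eq_sym].

Lemma br_linearl z : linear (br^~ z). Proof. by case: hL => -[h _] _ k x y; apply: h. Qed.
Lemma br_linearr x : linear (br x). Proof. by case: hL => -[_ [h _]] _ k y z; apply: h. Qed.
Lemma br_leibniz x y z : br x (br y z) = br (br x y) z - br (br x z) y.
Proof. by case: hL => -[_ [_ ->]]. Qed.

Lemma X_linear i j : i != j -> linear (X i j).
Proof. by case: hL => _ [[h _] _] hij k a b; apply: h. Qed.
Lemma X_mul i j k a b :
  i != j -> j != k -> i != k -> br (X i j a) (X j k b) = X i k (a * b).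
Proof. by move=> hij hjk hik; case: hL => _ [[_ [h _]] _]; exact: h. Qed.
Lemma X_mul_rev i j k a b :
  i != j -> j != k -> i != k -> br (X i j a) (X k i b) = - X k j (b * a).
Proof. by move=> hij hjk hik; case: hL => _ [[_ [_ [h _]]] _]; exact: h. Qed.
Lemma X_mul0 i j k l a b :
  i != j -> k != l -> j != k -> i != l -> br (X i j a) (X k l b) = 0.
Proof. by move=> hij hkl hjk hil; case: hL => _ [[_ [_ [_ h]]] _]; exact: h. Qed.

Definition stl4_span (x : L) : Prop :=
  forall P : L -> Prop, P 0 -> (forall u v, P u -> P v -> P (u + v)) ->
    (forall i j a, i != j -> P (X i j a)) ->
    (forall i j a b, i != j -> P (br (X i j a) (X j i b))) -> P x.

Lemma span0 : stl4_span 0. Proof. by move=> P. Qed.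
Lemma spanD u v : stl4_span u -> stl4_span v -> stl4_span (u + v).
Proof. by move=> hu hv P P0 PD PX PH; apply: (PD); [exact: hu | exact: hv]. Qed.
Lemma spanX i j a : i != j -> stl4_span (X i j a).
Proof. by move=> hij P _ _ PX _; apply: PX. Qed.
Lemma spanH i j a b : i != j -> stl4_span (br (X i j a) (X j i b)).
Proof. by move=> hij P _ _ _ PH; apply: PH. Qed.

Lemma spanZ k x : stl4_span x -> stl4_span (k *: x).
Proof.
move=> hx; apply: (hx (fun x => stl4_span (k *: x))) => [|u v hu hv|i j a hij|i j a b hij] /=.
- by rewrite scaler0; exact: span0.
- by rewrite scalerDr; exact: spanD.
- by rewrite -(linear_axiomZ (X_linear hij)); exact: spanX.
- by rewrite -(linear_axiomZ (br_linearl _)) -(linear_axiomZ (X_linear hij)); exact: spanH.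
Qed.

Lemma spanB u v : stl4_span u -> stl4_span v -> stl4_span (u - v).
Proof. by move=> hu hv; apply: spanD => //; rewrite -scaleN1r; exact: spanZ. Qed.

Lemma spanN v : stl4_span v -> stl4_span (- v).
Proof. by move=> hv; rewrite -sub0r; apply: spanB => //; exact: span0. Qed.

Lemma span_brXX p q i j a c : p != q -> i != j -> stl4_span (br (X p q a) (X i j c)).
Proof.
move=> hpq hij; case: (eqVneq (i, j) (q, p)) => [[-> ->]|hne]; first exact: spanH.
case: (eqVneq q i) => [eqi|hqi].
  have hpj : p != j by apply: contraNneq hne => <-; rewrite eqi.
  by rewrite -eqi in hij *; rewrite X_mul //; exact: spanX.
case: (eqVneq j p) => [ejp|hjp].
  by rewrite ejp in hij *; rewrite X_mul_rev //; try ne; apply: spanN; apply: spanX; ne.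
by rewrite X_mul0 //; try ne; exact: span0.
Qed.

Lemma br_H_X_generic p q i j a b c : p != q -> i != j ->
  (i, j) != (p, q) -> (i, j) != (q, p) ->
  exists r, br (br (X p q a) (X q p b)) (X i j c) = X i j r.
Proof.
move=> hpq hij hne1 hne2.
have [r1 e1] : exists r1, br (X p q a) (br (X q p b) (X i j c)) = X i j r1.
  case: (eqVneq p i) => [epi|hpi].
    have hqj : q != j by apply: contraNneq hne1 => <-; rewrite epi.
    rewrite -epi in hij *; rewrite X_mul ?X_mul //; try ne; by eexists.
  case: (eqVneq j q) => [ejq|hjq].
    rewrite ejq in hij *.
    by rewrite X_mul_rev ?(linear_axiomN (br_linearr _)) ?X_mul_rev ?opprK //; try ne; eexists.
  rewrite X_mul0 ?(linear_axiom0 (br_linearr _)) //; try ne.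
  by exists 0; rewrite (linear_axiom0 (X_linear hij)).
have [r2 e2] : exists r2, br (br (X p q a) (X i j c)) (X q p b) = X i j r2.
  case: (eqVneq q i) => [eqi|hqi].
    have hpj : p != j by apply: contraNneq hne2 => <-; rewrite eqi.
    rewrite -eqi in hij *; rewrite X_mul ?X_mul_rev //; try ne.
    by exists (- (b * (a * c))); rewrite (linear_axiomN (X_linear hij)).
  case: (eqVneq j p) => [ejp|hjp].
    rewrite ejp in hij *; rewrite X_mul_rev ?(linear_axiomN (br_linearl _)) ?X_mul //; try ne.
    by exists (- (c * a * b)); rewrite (linear_axiomN (X_linear hij)).
  rewrite X_mul0 ?(linear_axiom0 (br_linearl _)) //; try ne.
  by exists 0; rewrite (linear_axiom0 (X_linear hij)).
exists (r1 + r2); rewrite (linear_axiomD (X_linear hij)) -e1 -e2.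
by rewrite br_leibniz subrK.
Qed.

Lemma ord4_other (i j : 'I_4) : exists m : 'I_4, (m != i) && (m != j).
Proof.
have : (0 < #|[predC [:: i; j]]|)%N.
  rewrite -(ltn_add2l #|[:: i; j]|) addn0 cardC card_ord.
  exact: leq_ltn_trans (card_size _) _.
by case/card_gt0P => m; rewrite !inE negb_or; exists m.
Qed.

Lemma br_H_X p q i j a b c : p != q -> i != j ->
  exists r, br (br (X p q a) (X q p b)) (X i j c) = X i j r.
Proof.
move=> hpq hij.
have [hgen|] := boolP (((i, j) != (p, q)) && ((i, j) != (q, p))).
  by case/andP: hgen; exact: br_H_X_generic.
(* Here {i, j} = {p, q}: write X_ij(c) = [X_im(c), X_mj(1)] with m outside {i, j}. *)
have [m /andP[hmi hmj]] := ord4_other i j.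
rewrite negb_and !negbK => hpair.
have [hmp hmq] : m != p /\ m != q by case/orP: hpair => /eqP[<- <-]; split.
have [r1 e1] : exists r1, br (br (X p q a) (X q p b)) (X i m c) = X i m r1.
  by apply: br_H_X_generic; rewrite ?xpair_eqE ?(negbTE hmp) ?(negbTE hmq) ?andbF //; ne.
have [r2 e2] : exists r2, br (br (X p q a) (X q p b)) (X m j 1) = X m j r2.
  by apply: br_H_X_generic; rewrite ?xpair_eqE ?(negbTE hmp) ?(negbTE hmq) //; ne.
exists (r1 * 1 + c * r2).
have -> : X i j c = br (X i m c) (X m j 1) by rewrite X_mul ?mulr1 //; ne.
rewrite br_leibniz e1 e2 X_mul ?X_mul_rev ?opprK //; try ne.
by rewrite (linear_axiomD (X_linear hij)).
Qed.

Lemma span_brX x i j c : i != j -> stl4_span x -> stl4_span (br x (X i j c)).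
Proof.
move=> hij hx; apply: (hx (fun x => stl4_span (br x (X i j c)))) => /=
  [|u v hu hv|p q a hpq|p q a b hpq].
- by rewrite (linear_axiom0 (br_linearl _)); exact: span0.
- by rewrite (linear_axiomD (br_linearl _)); exact: spanD.
- exact: span_brXX.
- by have [r ->] := br_H_X a b c hpq hij; exact: spanX.
Qed.

Lemma span_br x y : stl4_span x -> stl4_span y -> stl4_span (br x y).
Proof.
move=> hx hy; apply: (hy (fun y => stl4_span (br x y))) => /=
  [|u v hu hv|i j a hij|i j a b hij].
- by rewrite (linear_axiom0 (br_linearr _)); exact: span0.
- by rewrite (linear_axiomD (br_linearr _)); exact: spanD.
- exact: span_brX.
have hji : j != i by rewrite eq_sym.
by rewrite br_leibniz; apply: spanB; apply: span_brX => //; exact: span_brX.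
Qed.

Definition span_pred : {pred L} :=
  fun x => if excluded_middle_informative (stl4_span x) then true else false.

Lemma span_predP x : reflect (stl4_span x) (x \in span_pred).
Proof.
by rewrite unfold_in /span_pred; case: excluded_middle_informative => h; constructor.
Qed.

Lemma span_pred_submod_closed : GRing.submod_closed span_pred.
Proof.
split; first by apply/span_predP; exact: span0.
move=> k u v /span_predP hu /span_predP hv; apply/span_predP.
by apply: spanD => //; exact: spanZ.
Qed.
HB.instance Definition _ :=
  GRing.isSubmodClosed.Build K L span_pred span_pred_submod_closed.

Inductive span_sub : predArgType := SpanSub (u : L) of u \in span_pred.
Definition span_val (w : span_sub) : L := let: SpanSub u _ := w in u.
HB.instance Definition _ := [isSub of span_sub for span_val].
HB.instance Definition _ := [Choice of span_sub by <:].
HB.instance Definition _ := [SubChoice_isSubZmodule of span_sub by <:].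
HB.instance Definition _ := [SubZmodule_isSubLmodule of span_sub by <:].

Definition br_sub (u v : span_sub) : span_sub := insubd (0 : span_sub) (br (val u) (val v)).
Definition X_sub i j (a : R) : span_sub := insubd (0 : span_sub) (X i j a).

Lemma val_br_sub u v : val (br_sub u v) = br (val u) (val v).
Proof.
by rewrite insubdK //; apply/span_predP; apply: span_br; apply/span_predP; exact: valP.
Qed.
Lemma val_X_sub i j a : i != j -> val (X_sub i j a) = X i j a.
Proof. by move=> hij; rewrite insubdK //; apply/span_predP; exact: spanX. Qed.

Lemma span_sub_leibniz : is_leibniz br_sub.
Proof.
split; [|split] => [k x y z|k x y z|x y z]; apply: val_inj; rewrite /= !val_br_sub /=.
- exact: br_linearl.
- exact: br_linearr.
- exact: br_leibniz.
Qed.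

Lemma span_sub_relations : stl4_relations br_sub X_sub.
Proof.
split=> [i j hij k a b|]; first by apply: val_inj; rewrite /= !val_X_sub //; exact: X_linear.
split=> [i j k hij hjk hik a b|]; first by apply: val_inj; rewrite val_br_sub !val_X_sub ?X_mul; ne.
split=> [i j k hij hjk hik a b|i j k l hij hkl hjk hil a b]; apply: val_inj.
  by rewrite /= val_br_sub !val_X_sub ?X_mul_rev //; ne.
by rewrite val_br_sub !val_X_sub ?X_mul0.
Qed.

Lemma stl4_span_all x : stl4_span x.
Proof.
(* The universal map into the span, followed by the inclusion, is the identity of L. *)
have [hleib [hrel huniv]] := hL.
have [[f [f_lin [f_br f_X]]] _] := huniv _ _ _ span_sub_leibniz span_sub_relations.
have [_ unique] := huniv _ _ _ hleib hrel.
have <- : val (f x) = x.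
  apply: (unique (fun y => val (f y)) id) => //.
  - by move=> k u v; rewrite f_lin.
  - by move=> u v; rewrite f_br val_br_sub.
  - by move=> i j a hij; rewrite f_X // val_X_sub.
by apply/span_predP; exact: valP.
Qed.

Lemma stl4_ind (P : L -> Prop) : P 0 -> (forall u v, P u -> P v -> P (u + v)) ->
  (forall i j a, i != j -> P (X i j a)) ->
  (forall i j a b, i != j -> P (br (X i j a) (X j i b))) -> forall x, P x.
Proof. by move=> P0 PD PX PH x; exact: stl4_span_all. Qed.

End Stl4Span.

Section QuotientRing.
Variables (K : comNzRingType) (R : algType K) (R2 : lmodType K) (pr : R -> R2).
Hypothesis hR2 : is_quotient_R2 pr.

Lemma pr_linear : linear pr. Proof. by case: hR2. Qed.
Let prB := linear_axiomB pr_linear.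
Let prD := linear_axiomD pr_linear.
Let prZ := linear_axiomZ pr_linear.

Lemma pr_eq0 (a : R) : pr a = 0 <-> in_I2 a. Proof. by case: hR2 => _ []. Qed.

Lemma in_I2_gen (g : R) : ideal_gen_I2 g -> in_I2 g.
Proof.
exists 1%N, (fun=> 1), (fun=> g), (fun=> 1); split=> //.
by rewrite big_ord1 mul1r mulr1.
Qed.

Lemma in_I2_mul (u x v : R) : in_I2 x -> in_I2 (u * x * v).
Proof.
case=> n [u0 [g [v0 [hg ->]]]].
exists n, (fun t => u * u0 t), g, (fun t => v0 t * v); split=> //.
by rewrite mulr_sumr mulr_suml; apply: eq_bigr => t _; rewrite !mulrA.
Qed.

Lemma pr_mulC a b : pr (a * b) = pr (b * a).
Proof.
by apply/eqP; rewrite -subr_eq0 -prB; apply/eqP/pr_eq0/in_I2_gen; right; exists a, b.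
Qed.

Lemma pr_mulr2n a : pr (a *+ 2) = 0.
Proof. by apply/pr_eq0/in_I2_gen; left; exists a. Qed.

Lemma pr_mul_congr a a' b b' : pr a = pr a' -> pr b = pr b' -> pr (a * b) = pr (a' * b').
Proof.
move=> ea eb.
have ha : in_I2 (a - a') by apply/pr_eq0; rewrite prB ea subrr.
have hb : in_I2 (b - b') by apply/pr_eq0; rewrite prB eb subrr.
have /pr_eq0 ha' := in_I2_mul 1 b ha; have /pr_eq0 hb' := in_I2_mul a' 1 hb.
rewrite mul1r in ha'; rewrite mulr1 in hb'.
apply/eqP; rewrite -subr_eq0 -prB.
have -> : a * b - a' * b' = (a - a') * b + a' * (b - b') by rewrite mulrBl mulrBr addrA subrK.
by rewrite prD ha' hb' addr0.
Qed.

Definition pr_section (y : R2) : R :=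
  proj1_sig (constructive_indefinite_description _ (proj1 (proj2 hR2) y)).
Lemma pr_sectionK y : pr (pr_section y) = y.
Proof. by rewrite /pr_section; case: constructive_indefinite_description. Qed.

(* The argument only makes the ring structure below depend on [hR2]. *)
Definition R2ring of is_quotient_R2 pr : Type := R2.
HB.instance Definition _ := GRing.Lmodule.on (R2ring hR2).
Local Notation R2r := (R2ring hR2).

Definition mul2 (u v : R2r) : R2r := pr (pr_section u * pr_section v).

Lemma pr_mul a b : pr (a * b) = mul2 (pr a) (pr b).
Proof. by apply: pr_mul_congr; rewrite pr_sectionK. Qed.

Lemma mul2A : associative mul2.
Proof.
move=> u v w; rewrite -(pr_sectionK u) -(pr_sectionK v) -(pr_sectionK w).
by rewrite -!pr_mul mulrA.
Qed.
Lemma mul2C : commutative mul2.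
Proof. by move=> u v; rewrite -(pr_sectionK u) -(pr_sectionK v) -!pr_mul pr_mulC. Qed.
Lemma mul2_1l : left_id (pr 1 : R2r) mul2.
Proof. by move=> u; rewrite -(pr_sectionK u) -pr_mul mul1r. Qed.
Lemma mul2Dl : left_distributive mul2 +%R.
Proof.
move=> u v w; rewrite -(pr_sectionK u) -(pr_sectionK v) -(pr_sectionK w).
by rewrite -prD -!pr_mul mulrDl prD.
Qed.

HB.instance Definition _ := GRing.Zmodule_isComPzRing.Build R2r mul2A mul2C mul2_1l mul2Dl.

Lemma pr_rmorphM a b : (pr (a * b) : R2r) = (pr a : R2r) * (pr b : R2r).
Proof. exact: pr_mul. Qed.

Lemma R2ring_char2 : (2 : R2r) = 0.
Proof. by rewrite -[2]/((pr 1 : R2r) *+ 2) mulr2n -prD -mulr2n pr_mulr2n. Qed.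

Lemma R2ring_scalerAl k (u v : R2r) : k *: (u * v) = k *: u * v.
Proof.
by rewrite -(pr_sectionK u) -(pr_sectionK v) -pr_rmorphM -!prZ -pr_rmorphM scalerAl.
Qed.

Lemma R2ring_oppr (x : R2r) : - x = x.
Proof. by apply/eqP; rewrite eq_sym -subr_eq0 opprK -mulr2n -mulr_natl R2ring_char2 mul0r. Qed.

End QuotientRing.

Section MatrixModel.
Variables (K : comNzRingType) (R : algType K) (R2 : lmodType K) (pr : R -> R2).
Hypothesis hR2 : is_quotient_R2 pr.
Local Notation R2r := (R2ring hR2).

Definition gl4 : Type := 'M[R2r]_4.
Local Notation M := gl4.
HB.instance Definition _ := GRing.PzRing.on M.

Definition scale_gl4 (k : K) (A : M) : M := (k *: (1 : R2r)) *: (A : 'M[R2r]_4).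

Lemma mulr_scale1 (k k' : K) : k *: (1 : R2r) * (k' *: (1 : R2r)) = (k * k') *: (1 : R2r).
Proof. by rewrite -R2ring_scalerAl mul1r scalerA. Qed.

Lemma scale_gl4A k k' A : scale_gl4 k (scale_gl4 k' A) = scale_gl4 (k * k') A.
Proof. by rewrite /scale_gl4 scalerA mulr_scale1. Qed.
Lemma scale1_gl4 : left_id 1 scale_gl4.
Proof. by move=> A; rewrite /scale_gl4 scale1r scale1r. Qed.
Lemma scale_gl4Dr : right_distributive scale_gl4 +%R.
Proof. by move=> k A B; rewrite /scale_gl4 scalerDr. Qed.
Lemma scale_gl4Dl A : {morph scale_gl4^~ A : k k' / k + k'}.
Proof. by move=> k k'; rewrite /scale_gl4 scalerDl scalerDl. Qed.

HB.instance Definition _ :=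
  GRing.Zmodule_isLmodule.Build K M scale_gl4A scale1_gl4 scale_gl4Dr scale_gl4Dl.

Lemma scale_gl4E k (A : M) : k *: A = (k *: (1 : R2r)) *: (A : 'M[R2r]_4).
Proof. by []. Qed.

Definition commutator (A C : M) : M := A * C - C * A.

Lemma commutator_is_leibniz : is_leibniz commutator.
Proof.
split; [|split]; last exact: commutator_leibniz.
all: move=> k A B C; rewrite /commutator mulrDl mulrDr !scale_gl4E -!mulmxE.
all: by rewrite -scalemxAl -scalemxAr scalerBr opprD addrACA.
Qed.

Definition delta_gl4 (i j : 'I_4) (a : R) : M := (pr a : R2r) *: delta_mx i j.

Lemma delta_gl4_mul i j k l a b :
  delta_gl4 i j a * delta_gl4 k l b = if j == k then delta_gl4 i l (a * b) else 0.
Proof.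
rewrite /delta_gl4 -mulmxE -scalemxAl -scalemxAr scalerA mul_delta_mx_cond -pr_rmorphM.
by case: eqP => _; rewrite ?mulr1n ?mulr0n ?scaler0.
Qed.

Lemma delta_gl4_linear i j : linear (delta_gl4 i j).
Proof.
move=> k a b; rewrite /delta_gl4 scale_gl4E scalerA -R2ring_scalerAl mul1r.
by rewrite (pr_linear hR2) scalerDl.
Qed.

Lemma delta_gl4_relations : stl4_relations commutator delta_gl4.
Proof.
split; first by move=> i j _; exact: delta_gl4_linear.
split=> [i j k hij hjk hik a b|].
  by rewrite /commutator !delta_gl4_mul eqxx eq_sym (negbTE hik) subr0.
split=> [i j k hij hjk hik a b|i j k l hij hkl hjk hil a b]; rewrite /commutator !delta_gl4_mul.
  by rewrite eqxx (negbTE hjk) sub0r.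
by rewrite (negbTE hjk) eq_sym (negbTE hil) subrr.
Qed.

Lemma mxtrace_commutator A C : \tr (commutator A C) = 0.
Proof. by rewrite /commutator raddfB /= -!mulmxE mxtrace_mulC subrr. Qed.

Lemma mxtrace_delta_gl4 i j a : i != j -> \tr (delta_gl4 i j a) = 0.
Proof.
move=> hij; rewrite /delta_gl4 mxtraceZ /mxtrace big1 ?mulr0 // => p _.
by rewrite mxE; case: eqP => [-> | //]; rewrite (negbTE hij).
Qed.

Lemma commutator_delta_gl4_offdiag i j a b p q :
  p != q -> commutator (delta_gl4 i j a) (delta_gl4 j i b) p q = 0.
Proof.
move=> hpq; have diag0 u : (p == u) && (q == u) = false.
  by apply: contraNF hpq => /andP[/eqP-> /eqP->].
by rewrite /commutator !delta_gl4_mul !eqxx /delta_gl4 !mxE !diag0 !mulr0 subrr.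
Qed.

End MatrixModel.

Section CocycleForm.
Variables (K : comNzRingType) (R : algType K) (R2 : lmodType K) (pr : R -> R2).
Hypothesis hR2 : is_quotient_R2 pr.
Variable theta : 'I_4 -> 'I_4 -> 'I_4 -> 'I_4 -> 'I_6.
Hypothesis htheta : is_class_labelling theta.
Local Notation R2r := (R2ring hR2).
Local Notation M := (gl4 hR2).

Definition cocycle_term (A C D : M) p q r s : R2r :=
  A p q * commutator C D r s + commutator A D p q * C r s - commutator A C p q * D r s.

Lemma class_sum_cocycle_term (A C D : M) i j k l :
  pairwise_distinct4 i j k l -> \tr A = 0 -> \tr C = 0 -> \tr D = 0 ->
  class_sum (cocycle_term A C D) i j k l = 0.
Proof.
(* Once [B l l] is eliminated through the trace all coefficients are even; [ring] only
   cancels positive multiples of [2], so the signs are removed first. *)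
move=> hpd; have sum4 := sum_ord4_distinct _ hpd.
have diag_last (B : M) : \tr B = 0 -> B l l = B i i + B j j + B k k.
  by rewrite /mxtrace sum4 => /eqP; rewrite addr_eq0 R2ring_oppr => /eqP.
move=> /diag_last hA /diag_last hC /diag_last hD.
rewrite /class_sum /cocycle_term /commutator -!mulmxE !mxE !sum4 hA hC hD !R2ring_oppr.
by have h2 := R2ring_char2 hR2; ring: h2.
Qed.

Lemma theta_class_invariant i j k l : pairwise_distinct4 i j k l ->
  [/\ theta k j i l = theta i j k l, theta i l k j = theta i j k l
    & theta k l i j = theta i j k l].
Proof.
move=> hpd; have [theta_eq _] := htheta.
have hpd13 : pairwise_distinct4 k j i l by rewrite pairwise_distinct4_swap13.
have hpd24 : pairwise_distinct4 i l k j by rewrite pairwise_distinct4_swap24.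
have hpd1324 : pairwise_distinct4 k l i j by rewrite pairwise_distinct4_swap13.
split; apply/esym/(theta_eq _ _ _ _ _ _ _ _ hpd) => //.
- exact: Or42.
- exact: Or43.
- exact: Or44.
Qed.

Lemma epsD m (x y : R2) t : eps m x t + eps m y t = eps m (x + y) t.
Proof. by rewrite /eps; case: ifP; rewrite ?addr0. Qed.
Lemma epsB m (x y : R2) t : eps m x t - eps m y t = eps m (x - y) t.
Proof. by rewrite /eps; case: ifP; rewrite ?subr0. Qed.
Lemma eps_eq0 m (x : R2) t : x = 0 -> eps m x t = 0.
Proof. by move=> ->; rewrite /eps; case: ifP. Qed.

Definition psi_gl4 t (A C : M) : R2 := sum_quad (fun i j k l =>
  if pairwise_distinct4 i j k l then eps (theta i j k l) (A i j * C k l) t else 0).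

Lemma psi_gl4_cocycle t (A C D : M) : \tr A = 0 -> \tr C = 0 -> \tr D = 0 ->
  psi_gl4 t A (commutator C D) + psi_gl4 t (commutator A D) C
  - psi_gl4 t (commutator A C) D = 0.
Proof.
move=> hA hC hD; rewrite /psi_gl4 sum_quadD sum_quadB.
rewrite -[RHS](@sum_distinct4_eq0 _
  (fun i j k l => eps (theta i j k l) (cocycle_term A C D i j k l) t)).
  apply: eq_sum_quad => i j k l.
  by case: ifP => _; rewrite ?epsD ?epsB ?addr0 ?subr0.
move=> i j k l hpd; rewrite /class_sum /=; have [-> -> ->] := theta_class_invariant hpd.
rewrite !epsD; apply: eps_eq0.
by have := class_sum_cocycle_term hpd hA hC hD.
Qed.

Lemma psi_gl4Dl t (A A' C : M) : psi_gl4 t (A + A') C = psi_gl4 t A C + psi_gl4 t A' C.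
Proof.
rewrite /psi_gl4 sum_quadD; apply: eq_sum_quad => i j k l.
by case: ifP => _; rewrite ?addr0 // epsD mxE mulrDl.
Qed.

Lemma psi_gl4Dr t (A C C' : M) : psi_gl4 t A (C + C') = psi_gl4 t A C + psi_gl4 t A C'.
Proof.
rewrite /psi_gl4 sum_quadD; apply: eq_sum_quad => i j k l.
by case: ifP => _; rewrite ?addr0 // epsD mxE mulrDr.
Qed.

Lemma psi_gl4_0l t (C : M) : psi_gl4 t 0 C = 0.
Proof. by apply: (addrI (psi_gl4 t 0 C)); rewrite -psi_gl4Dl !addr0. Qed.

Lemma psi_gl4_0r t (A : M) : psi_gl4 t A 0 = 0.
Proof. by apply: (addrI (psi_gl4 t A 0)); rewrite -psi_gl4Dr !addr0. Qed.

Lemma psi_gl4_offdiagl t (A C : M) : (forall p q, p != q -> A p q = 0) -> psi_gl4 t A C = 0.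
Proof.
move=> A_diag; rewrite /psi_gl4 /sum_quad; do 4!(apply: big1 => ? _).
by case: ifP => // /andP[hpq _]; apply: eps_eq0; rewrite A_diag // mul0r.
Qed.

Lemma psi_gl4_offdiagr t (A C : M) : (forall p q, p != q -> C p q = 0) -> psi_gl4 t A C = 0.
Proof.
move=> C_diag; rewrite /psi_gl4 /sum_quad; do 4!(apply: big1 => ? _).
by case: ifP => // /and4P[_ _ _ /and3P[_ _ hrs]]; apply: eps_eq0; rewrite C_diag // mulr0.
Qed.

Lemma psi_gl4_delta t i j k l a b :
  psi_gl4 t (delta_gl4 hR2 i j a) (delta_gl4 hR2 k l b) =
  if pairwise_distinct4 i j k l then eps (theta i j k l) (pr (a * b)) t else 0.
Proof.
have delta_gl4_entry u v c p q :
    delta_gl4 hR2 u v c p q = if (p == u) && (q == v) then pr c else 0.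
  by rewrite !mxE; case: andP; rewrite ?mulr1 ?mulr0.
have summand0 p q r s : (p == i) && (q == j) && (r == k) && (s == l) = false ->
    (if pairwise_distinct4 p q r s then
       eps (theta p q r s) (delta_gl4 hR2 i j a p q * delta_gl4 hR2 k l b r s) t
     else 0) = 0.
  move=> hne; case: ifP => // _; apply: eps_eq0; rewrite !delta_gl4_entry.
  by move: hne; case: (p == i); case: (q == j); case: (r == k); case: (s == l);
    rewrite /= ?mul0r ?mulr0.
rewrite /psi_gl4 /sum_quad (big_only1 i) //= => [|p hp _]; last first.
  by do 3!(apply: big1 => ? _); apply: summand0; rewrite (negbTE hp).
rewrite (big_only1 j) //= => [|q hq _]; last first.
  by do 2!(apply: big1 => ? _); apply: summand0; rewrite (negbTE hq) andbF.
rewrite (big_only1 k) //= => [|r hr _]; last first.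
  by apply: big1 => ? _; apply: summand0; rewrite (negbTE hr) andbF.
rewrite (big_only1 l) //= => [|s hs _]; last by apply: summand0; rewrite (negbTE hs) andbF.
by rewrite !delta_gl4_entry !eqxx pr_rmorphM.
Qed.

End CocycleForm.

Section Cocycle.
Variables (K : comNzRingType) (R : algType K) (L : lmodType K) (br : L -> L -> L)
  (X : 'I_4 -> 'I_4 -> R -> L).
Hypothesis hL : is_stl4 br X.
Variables (R2 : lmodType K) (pr : R -> R2).
Hypothesis hR2 : is_quotient_R2 pr.
Variable theta : 'I_4 -> 'I_4 -> 'I_4 -> 'I_4 -> 'I_6.
Variable psi : L -> L -> 'I_6 -> R2.
Hypothesis psi_linl : forall (k : K) (x y z : L) (t : 'I_6),
  psi (k *: x + y) z t = k *: psi x z t + psi y z t.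
Hypothesis psi_linr : forall (k : K) (x y z : L) (t : 'I_6),
  psi x (k *: y + z) t = k *: psi x y t + psi x z t.
Hypothesis psi_XX : forall (i j k l : 'I_4) (a b : R) (t : 'I_6), i != j -> k != l ->
  psi (X i j a) (X k l b) t =
    if pairwise_distinct4 i j k l then eps (theta i j k l) (pr (a * b)) t else 0.
Hypothesis psi_Hl : forall (i j : 'I_4) (a b : R) (x : L) (t : 'I_6), i != j ->
  psi (br (X i j a) (X j i b)) x t = 0.
Hypothesis psi_Hr : forall (i j : 'I_4) (a b : R) (x : L) (t : 'I_6), i != j ->
  psi x (br (X i j a) (X j i b)) t = 0.
Variable F : L -> gl4 hR2.
Hypothesis F_linear : linear F.
Hypothesis F_br : forall x y, F (br x y) = commutator (F x) (F y).
Hypothesis F_X : forall i j a, i != j -> F (X i j a) = delta_gl4 hR2 i j a.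

Lemma psi_linearl y t : linear (fun x => psi x y t).
Proof. by move=> k u v; exact: psi_linl. Qed.
Lemma psi_linearr x t : linear (fun y => psi x y t).
Proof. by move=> k u v; exact: psi_linr. Qed.

Lemma mxtrace_F x : \tr (F x) = 0.
Proof.
elim/(stl4_ind hL): x => [|u v hu hv|i j a hij|i j a b hij].
- by rewrite (linear_axiom0 F_linear) mxtrace0.
- by rewrite (linear_axiomD F_linear) mxtraceD hu hv addr0.
- by rewrite F_X // mxtrace_delta_gl4.
- by rewrite F_br mxtrace_commutator.
Qed.

Lemma F_H_offdiag i j a b p q : i != j -> p != q -> F (br (X i j a) (X j i b)) p q = 0.
Proof.
move=> hij hpq; have hji : j != i by rewrite eq_sym.
by rewrite F_br !F_X // commutator_delta_gl4_offdiag.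
Qed.

Lemma psi_eq_psi_gl4_X i j a y t : i != j ->
  psi (X i j a) y t = psi_gl4 theta t (F (X i j a)) (F y).
Proof.
move=> hij; elim/(stl4_ind hL): y => [|u v hu hv|k l b hkl|k l b c hkl].
- by rewrite (linear_axiom0 (psi_linearr _ t)) (linear_axiom0 F_linear) psi_gl4_0r.
- by rewrite (linear_axiomD (psi_linearr _ t)) (linear_axiomD F_linear) psi_gl4Dr hu hv.
- by rewrite psi_XX // !F_X // psi_gl4_delta.
- by rewrite psi_Hr // psi_gl4_offdiagr // => p q; exact: F_H_offdiag.
Qed.

Lemma psi_eq_psi_gl4 x y t : psi x y t = psi_gl4 theta t (F x) (F y).
Proof.
elim/(stl4_ind hL): x => [|u v hu hv|i j a hij|i j a b hij].
- by rewrite (linear_axiom0 (psi_linearl y t)) (linear_axiom0 F_linear) psi_gl4_0l.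
- by rewrite (linear_axiomD (psi_linearl y t)) (linear_axiomD F_linear) psi_gl4Dl hu hv.
- exact: psi_eq_psi_gl4_X.
- by rewrite psi_Hl // psi_gl4_offdiagl // => p q; exact: F_H_offdiag.
Qed.

End Cocycle.

Theorem lemma3p3
  (K : comNzRingType) (R : algType K)
  (hfree : free_with_basis_containing_1 R)
  (L : lmodType K) (br : L -> L -> L) (X : 'I_4 -> 'I_4 -> R -> L)
  (hL : is_stl4 br X)
  (R2 : lmodType K) (pr : R -> R2) (hR2 : is_quotient_R2 pr)
  (theta : 'I_4 -> 'I_4 -> 'I_4 -> 'I_4 -> 'I_6) (htheta : is_class_labelling theta)
  (psi : L -> L -> 'I_6 -> R2)
  (psi_linl : forall (k : K) (x y z : L) (t : 'I_6),
      psi (k *: x + y) z t = k *: psi x z t + psi y z t)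
  (psi_linr : forall (k : K) (x y z : L) (t : 'I_6),
      psi x (k *: y + z) t = k *: psi x y t + psi x z t)
  (psi_XX : forall (i j k l : 'I_4) (a b : R) (t : 'I_6), i != j -> k != l ->
      psi (X i j a) (X k l b) t =
        if pairwise_distinct4 i j k l then eps (theta i j k l) (pr (a * b)) t
        else 0)
  (psi_Hl : forall (i j : 'I_4) (a b : R) (x : L) (t : 'I_6), i != j ->
      psi (br (X i j a) (X j i b)) x t = 0)
  (psi_Hr : forall (i j : 'I_4) (a b : R) (x : L) (t : 'I_6), i != j ->
      psi x (br (X i j a) (X j i b)) t = 0) :
  forall (x y z : L) (t : 'I_6),
    psi x (br y z) t + psi (br x z) y t - psi (br x y) z t = 0.
Proof.
move=> x y z t; have [_ [_ universal]] := hL.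
have [[F [F_linear [F_br F_X]]] _] :=
  universal _ _ _ (commutator_is_leibniz hR2) (delta_gl4_relations hR2).
have psiE := psi_eq_psi_gl4 hL psi_linl psi_linr psi_XX psi_Hl psi_Hr F_linear F_br F_X.
rewrite !psiE !F_br.
by apply: psi_gl4_cocycle => //; exact: (mxtrace_F hL F_linear F_br F_X).
Qed.
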